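(* Let $g_1,g_2$ be monic divisors of $x^m-1$ over $\mathbb{F}_{q^2}$, $v_1\in\mathcal{R}$, and let $\mathcal{D}_1$ be the QC code of length $2m$ over $\mathbb{F}_{q^2}$ generated by $(g_1,v_1g_1)$ and $(0,g_2)$. Then $\mathcal{D}_1$ is Hermitian dual-containing iff $g_1\mid g_1^{\perp_H}$, $g_1\mid g_2^{\perp_H}\overline{v_1}^{[q]}$ and $g_2\mid g_2^{\perp_H}(1+v_1\overline{v_1}^{[q]})$.
   Context: $q$ a prime power; $\mathcal{R}=\mathbb{F}_{q^2}[x]/(x^m-1)$, elements identified with representatives of degree $<m$; $[k]=(k_0,\dots,k_{m-1})$; $\overline{k}(x)=k(x^{-1})\bmod(x^m-1)$; $k^{[q]}=\sum k_i^qx^i$; $f^*(x)=x^{\deg f}f(1/x)$; for $k\in\mathcal{R}$, $f=\frac{x^m-1}{\gcd(k,x^m-1)}$, $k^{\perp}=f(0)^{-1}f^*$, $k^{\perp_H}=(k^{[q]})^{\perp}$. ''$g\mid a$'' for $g\mid x^m-1$ means $g$ divides the representative of $a$. The QC code generated by $(u_{i1},u_{i2})$, $i=1,2$, is $\{([r_1u_{11}+r_2u_{21}],[r_1u_{12}+r_2u_{22}]):r_i\in\mathcal{R}\}$. Hermitian inner product $\sum u_i^qv_i$; dual-containing means $\mathcal{D}_1^{\perp_H}\subseteq\mathcal{D}_1$. *)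

From HB Require Import structures.
From mathcomp Require Import all_boot all_order all_algebra.
Set Implicit Arguments. Unset Strict Implicit. Unset Printing Implicit Defensive.
Import Order.TTheory GRing.Theory.
Local Open Scope ring_scope.

Section QC.
Variable F : finFieldType.

Definition xm1 (m : nat) : {poly F} := 'X^m - 1.

(* representative of degree < m of the class of p in R = F[x]/(x^m-1) *)
Definition red (m : nat) (p : {poly F}) : {poly F} := p %% xm1 m.

Definition vecR (m : nat) (k : {poly F}) : 'rV[F]_m := poly_rV (red m k).

(* kbar(x) = k(x^{-1}) mod (x^m - 1), for k represented with degree < m *)
Definition rbar (m : nat) (k : {poly F}) : {poly F} :=
  \sum_(i < m) k`_i *: 'X^((m - i) %% m).

Definition frobq (q : nat) (k : {poly F}) : {poly F} :=
  map_poly (fun a : F => a ^+ q) k.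

(* reciprocal polynomial f^*(x) = x^(deg f) f(1/x) *)
Definition recip (f : {poly F}) : {poly F} := Poly (rev f).

Definition perp (m : nat) (k : {poly F}) : {poly F} :=
  let f := xm1 m %/ gcdp k (xm1 m) in (f.[0])^-1 *: recip f.

Definition perpH (m q : nat) (k : {poly F}) : {poly F} := perp m (frobq q k).

Definition QCcode (m : nat) (u11 u12 u21 u22 : {poly F}) :
    'rV[F]_m * 'rV[F]_m -> Prop :=
  fun c => exists r1 r2 : {poly F},
    c = (vecR m (r1 * u11 + r2 * u21), vecR m (r1 * u12 + r2 * u22)).

(* Hermitian inner product sum u_i^q v_i on F^m x F^m = F^(2m) *)
Definition hermIP (m q : nat) (u v : 'rV[F]_m * 'rV[F]_m) : F :=
  \sum_(i < m) (u.1 0 i) ^+ q * v.1 0 i + \sum_(i < m) (u.2 0 i) ^+ q * v.2 0 i.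

Definition hermDual (m q : nat) (C : 'rV[F]_m * 'rV[F]_m -> Prop) :
    'rV[F]_m * 'rV[F]_m -> Prop :=
  fun v => forall u, C u -> @hermIP m q u v = 0.

Definition herm_dual_containing (m q : nat) (C : 'rV[F]_m * 'rV[F]_m -> Prop) :
    Prop := forall v, @hermDual m q C v -> C v.

End QC.
Arguments hermIP {F} m q u v.
Arguments hermDual {F} m q C v.
Arguments herm_dual_containing {F} m q C.
Arguments QCcode {F} m u11 u12 u21 u22 c.
Arguments rbar {F} m k.
Arguments frobq {F} q k.
Arguments perpH {F} m q k.
Arguments red {F} m p.
Arguments vecR {F} m k.
Arguments perp {F} m k.

From HB Require Import structures.
From mathcomp Require Import all_boot all_order all_algebra all_solvable all_field.
From mathcomp Require Import ring zify.
Import GRing.Theory.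
Set Implicit Arguments. Unset Strict Implicit. Unset Printing Implicit Defensive.
Local Open Scope ring_scope.

(* Work modulo x^m - 1, where k |-> kbar is the ring involution p |-> p(x^(m-1))
   and k |-> kbar^[q] is its composite with the coefficientwise Frobenius.  The
   Hermitian product of ([u1], [u2]) with ([a], [b]) is the coefficient of
   x^(m-1) in u1^[q] a~ + u2^[q] b~ modulo x^m - 1, where a~ is the reversal of
   a; since these coefficients for all shifts x^k z determine z modulo x^m - 1,
   ([a], [b]) is orthogonal to D1 iff x^m - 1 divides g1bar^[q] (a + W b) and
   g2bar^[q] b, where W = v1bar^[q].  Writing x^m - 1 = h g, the reciprocal
   identity h^* g^* = -(x^m - 1) turns x^m - 1 | gbar^[q] c into g^perp_H | c.
   Hence the dual of D1 is {(a, b) | g1^perp_H | a + W b, g2^perp_H | b}, while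
   (a, b) lies in D1 iff g1 | a and g2 | b - v1 a.  Testing dual-containment on
   the dual words (g1^perp_H, 0) and (-W g2^perp_H, g2^perp_H) gives the three
   conditions.  Conversely they suffice, once one adds g2 | v1 g1^perp_H, which
   follows from the second condition by applying k |-> kbar^[q], an involution
   because #|F| = q^2. *)

Definition revp (R : nzRingType) (k : nat) (p : {poly R}) : {poly R} :=
  \poly_(i < k) p`_(k.-1 - i).

Lemma revpE (R : nzRingType) k (p : {poly R}) :
  revp k p = \sum_(i < k) p`_i *: 'X^(k.-1 - i).
Proof.
rewrite /revp poly_def (reindex_inj rev_ord_inj) /=.
by apply: eq_bigr => i _; have ik := ltn_ord i; congr (p`_ _ *: 'X^ _); lia.
Qed.

Section PolyCong.
Variable F : fieldType.
Implicit Types d p x y A B : {poly F}.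

Lemma dvdp_sub_eq d x y : d %| x - y -> (d %| x) = (d %| y).
Proof. by move=> dxy; rewrite -[x](subrK y) dvdp_addr. Qed.

Lemma dvdp_mul_sub d x x' y y' :
  d %| x - x' -> d %| y - y' -> d %| x * y - x' * y'.
Proof.
move=> dx dy; have -> : x * y - x' * y' = (x - x') * y + x' * (y - y') by ring.
by rewrite dvdp_add ?(dvdp_mulr _ dx) ?(dvdp_mull _ dy).
Qed.

Lemma dvdp_comp_sub d p A B : d %| A - B -> d %| (p \Po A) - (p \Po B).
Proof.
move=> dAB; elim/poly_ind: p => [|p c IH].
  by rewrite !comp_poly0 subrr dvdp0.
rewrite !comp_poly_MXaddC.
have -> : (p \Po A) * A + c%:P - ((p \Po B) * B + c%:P)
    = ((p \Po A) - (p \Po B)) * A + (p \Po B) * (A - B) by ring.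
by rewrite dvdp_add ?(dvdp_mulr _ IH) ?(dvdp_mull _ dAB).
Qed.

End PolyCong.

(* Modulo [x^m - 1], [xinv m] is [k |-> kbar], as [x^(m-1)] inverts [x]. *)
Notation xinv m := (comp_poly 'X^(m.-1)).

Section CyclicModulus.
Variables (F : fieldType) (m : nat).
Hypothesis m_gt0 : (0 < m)%N.
Local Notation n := ('X^m - 1 : {poly F}).
Implicit Types a b p u w x y : {poly F}.

Lemma size_xm1 : size n = m.+1.
Proof. by rewrite -polyC1 size_XnsubC. Qed.

Lemma xm1_neq0 : n != 0.
Proof. by rewrite -size_poly_eq0 size_xm1. Qed.

Lemma xm1_dvd_XnM_sub1 k : n %| 'X^(k * m) - 1.
Proof. by rewrite mulnC exprM (subrX1 ('X^m)) dvdp_mulr. Qed.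

Lemma Xn_modn_cong i : n %| 'X^i - 'X^(i %% m).
Proof.
rewrite {1}(divn_eq i m) exprD -{2}['X^(i %% m)]mul1r -mulrBl.
exact/dvdp_mulr/xm1_dvd_XnM_sub1.
Qed.

Lemma Xn_cong i j : i = j %[mod m] -> n %| 'X^i - 'X^j.
Proof.
move=> eij; have -> : 'X^i - 'X^j = ('X^i - 'X^(i %% m)) - ('X^j - 'X^(j %% m)) :> {poly F}.
  by rewrite eij; ring.
by rewrite dvdp_sub ?Xn_modn_cong.
Qed.

Lemma xm1_nroot0 : ~~ root n 0.
Proof. by rewrite rootE !hornerE expr0n gtn_eqF // sub0r oppr_eq0 oner_eq0. Qed.

Lemma coprimep_xm1_Xn j : coprimep n 'X^j.
Proof.
apply: coprimep_expr; have := coprimep_XsubC n 0; rewrite polyC0 subr0 => ->.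
exact: xm1_nroot0.
Qed.

Lemma dvdp_xm1_mulXn j y : (n %| 'X^j * y) = (n %| y).
Proof. exact/Gauss_dvdpr/coprimep_xm1_Xn. Qed.

Lemma sum_Xn_cong k (c : nat -> F) (e f : nat -> nat) :
    (forall i, (i < k)%N -> e i = f i %[mod m]) ->
  n %| \sum_(i < k) c i *: 'X^(e i) - \sum_(i < k) c i *: 'X^(f i).
Proof.
move=> ef; rewrite -sumrB; apply: (big_ind (fun x => n %| x)) => //.
- exact: dvdp_add.
- by move=> i _; rewrite -scalerBr -mul_polyC dvdp_mull // Xn_cong ?ef.
Qed.

Lemma xinvE k p : (size p <= k)%N -> xinv m p = \sum_(i < k) p`_i *: 'X^(m.-1 * i).
Proof.
move=> spk; rewrite -{1}(take_poly_id spk) /take_poly poly_def rmorph_sum.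
by apply: eq_bigr => i _; rewrite /= comp_polyZ comp_Xn_poly exprM.
Qed.

Lemma xinvK_cong p : n %| xinv m (xinv m p) - p.
Proof.
rewrite -comp_polyA comp_Xn_poly -exprM -{2}(comp_polyXr p).
apply: dvdp_comp_sub.
have e : (m.-1 * m.-1 + m = m.-1 * m + 1)%N by nia.
by have := @Xn_cong _ 1; rewrite expr1; apply; rewrite -modnDr e modnMDl.
Qed.

Lemma xinv_dvdp y : n %| y -> n %| xinv m y.
Proof.
case/dvdpP=> k ->; rewrite rmorphM dvdp_mull //= rmorphB rmorph1 /=.
by rewrite comp_Xn_poly -exprM xm1_dvd_XnM_sub1.
Qed.

Lemma dvdp_xinv y : (n %| xinv m y) = (n %| y).
Proof.
apply/idP/idP => [/xinv_dvdp|/xinv_dvdp //].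
by rewrite (dvdp_sub_eq (xinvK_cong y)).
Qed.

Lemma revp_cong k p : (size p <= k)%N -> n %| 'X^(k.-1) * xinv m p - revp k p.
Proof.
move=> spk; rewrite (xinvE spk) revpE mulr_sumr.
under eq_bigr => i _ do rewrite -scalerAr -exprD.
apply: (@sum_Xn_cong k (fun i => p`_i) (fun i => k.-1 + m.-1 * i)%N (fun i => k.-1 - i)%N) => i ik.
by rewrite (_ : k.-1 + _ = i * m + (k.-1 - i))%N ?modnMDl //; nia.
Qed.

Lemma dvdp_xm1_revp u w a b : (size a <= m)%N -> (size b <= m)%N ->
  (n %| u * revp m a + w * revp m b) = (n %| xinv m u * a + xinv m w * b).
Proof.
move=> sa sb.
have ra := revp_cong sa; have rb := revp_cong sb.
have shift : n %| 'X^(m.-1) * (u * xinv m a + w * xinv m b) - (u * revp m a + w * revp m b).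
  have -> : 'X^(m.-1) * (u * xinv m a + w * xinv m b) - (u * revp m a + w * revp m b)
      = u * ('X^(m.-1) * xinv m a - revp m a) + w * ('X^(m.-1) * xinv m b - revp m b).
    by ring.
  by rewrite dvdp_add ?dvdp_mull.
rewrite -(dvdp_sub_eq shift) dvdp_xm1_mulXn // -dvdp_xinv // rmorphD !rmorphM /=.
apply: dvdp_sub_eq; rewrite opprD addrACA -!mulrBr.
by rewrite dvdp_add ?dvdp_mull ?xinvK_cong.
Qed.

End CyclicModulus.

Section Reciprocal.
Variable F : finFieldType.
Implicit Types p r : {poly F}.

Lemma recip_revp p : recip p = revp (size p) p.
Proof.
apply/polyP=> i; rewrite /recip /revp coef_Poly coef_poly.
case: ltnP => ip; last by rewrite nth_default // size_rev.
by rewrite nth_rev // subnS -subn1 subnAC subn1.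
Qed.

Lemma size_recip p : (size (recip p) <= size p)%N.
Proof. by rewrite recip_revp size_poly. Qed.

Lemma coef0_recip p : (recip p)`_0 = lead_coef p.
Proof.
rewrite recip_revp coef_poly lead_coefE.
by case E: (size p) => [|k] /=; rewrite ?subn0 // nth_default ?E.
Qed.

Lemma recip_eq0 p : (recip p == 0) = (p == 0).
Proof.
apply/eqP/eqP=> [rp0|->]; last by rewrite /recip polyseq0.
by apply/eqP; rewrite -lead_coef_eq0 -coef0_recip rp0 coef0.
Qed.

Lemma recipM p r : recip (p * r) = recip p * recip r.
Proof.
have [->|p0] := eqVneq p 0; first by rewrite mul0r /recip polyseq0 mul0r.
have [->|r0] := eqVneq r 0; first by rewrite mulr0 /recip polyseq0 mulr0.
set M := size (p * r).
have sM : ((size p).-1 + (size r).-1 = M.-1)%N.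
  have sp : (0 < size p)%N by rewrite size_poly_gt0.
  have sr : (0 < size r)%N by rewrite size_poly_gt0.
  by rewrite /M size_mul //; move: (size p) (size r) sp sr => a b; lia.
have M_gt0 : (0 < M)%N by rewrite size_poly_gt0 mulf_neq0.
(* Modulo [x^M - 1], [recip] agrees with [x^(size - 1) * xinv M], which is
   multiplicative; both sides have size at most [M], so they are equal. *)
have cong : 'X^M - 1 %| recip (p * r) - recip p * recip r.
  rewrite !recip_revp -/M.
  have cpr := revp_cong M_gt0 (leqnn M).
  have cp_r := dvdp_mul_sub (revp_cong M_gt0 (leqnn (size p)))
                            (revp_cong M_gt0 (leqnn (size r))).
  rewrite mulrACA -exprD sM -rmorphM in cp_r.
  have -> : revp M (p * r) - revp (size p) p * revp (size r) r =
      ('X^(M.-1) * xinv M (p * r) - revp (size p) p * revp (size r) r)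
      - ('X^(M.-1) * xinv M (p * r) - revp M (p * r)) by ring.
  by rewrite dvdp_sub.
apply/eqP; rewrite -subr_eq0; apply/negPn/negP => nz.
have := dvdp_leq nz cong; rewrite size_xm1 // ltnNge; apply/negP/negPn.
rewrite (leq_trans (size_polyD _ _)) // geq_max size_polyN size_recip /=.
rewrite (leq_trans (size_polyMleq _ _)) //.
by move: sM M_gt0 (size_recip p) (size_recip r); rewrite -!subn1; lia.
Qed.

Lemma recipC (c : F) : recip c%:P = c%:P.
Proof. by rewrite /recip polyseqC rev_nseq -polyseqC polyseqK. Qed.

Lemma recipZ (c : F) p : recip (c *: p) = c *: recip p.
Proof. by rewrite -!mul_polyC recipM recipC. Qed.

Lemma eqp_recip p r : p %= r -> recip p %= recip r.
Proof.
case/eqpP=> [[c1 c2] /andP[c10 c20] e].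
by apply/eqpP; exists (c1, c2); rewrite ?c10 ?c20 //= -!recipZ e.
Qed.

End Reciprocal.

Section CyclicPerp.
Variables (F : finFieldType) (m : nat).
Hypothesis m_gt0 : (0 < m)%N.
Local Notation n := (xm1 F m).

Lemma recip_xm1 : recip n = - n.
Proof.
apply/polyP=> i; rewrite recip_revp size_xm1 // /xm1 coefN coef_poly.
rewrite !coefB !coefXn !coefC; case: ltnP => im; last first.
  by rewrite (gtn_eqF im) gtn_eqF ?(leq_trans m_gt0 (ltnW im)) // subrr oppr0.
have -> : ((m.+1.-1 - i == m) = (i == 0))%N by apply/eqP/eqP; lia.
have -> : ((m.+1.-1 - i == 0) = (i == m))%N by apply/eqP/eqP; lia.
by case: (i == m); case: (i == 0%N); rewrite /= ?mulr1n ?mulr0n; ring.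
Qed.

Lemma perp_eqp G : G %| n -> perp m G %= recip (n %/ G).
Proof.
move=> Gn; rewrite /perp; set f := n %/ gcdp G n.
have ef : f %= n %/ G := eqp_div (eqpxx n) (dvdp_gcd_idl Gn).
have f0 : f.[0] != 0.
  apply/negP=> /eqP f0; have /negP := xm1_nroot0 F m_gt0; apply.
  by apply: (@root_dvdp _ f); [rewrite (eqp_dvdl _ ef) divp_dvd | apply/rootP].
exact: eqp_trans (eqp_scale _ (invr_neq0 f0)) (eqp_recip ef).
Qed.

(* With [x^m - 1 = h * G], [recip h * recip G = - (x^m - 1)], and modulo
   [x^m - 1], [recip G] is [xinv m G] up to a power of [x]. *)
Lemma dvdp_xm1_xinv_mul G c :
  G %| n -> G != 0 -> (n %| xinv m G * c) = (perp m G %| c).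
Proof.
move=> Gn G0.
have recipG : n %| 'X^((size G).-1) * xinv m G - recip G.
  by rewrite recip_revp revp_cong.
rewrite -(dvdp_xm1_mulXn m_gt0 (size G).-1) mulrA.
have := dvdp_mulr c recipG; rewrite mulrBl => /dvdp_sub_eq ->.
rewrite (eqp_dvdl _ (perp_eqp Gn)) -dvdpNl -recip_xm1 -{1}(divpK Gn) recipM.
by rewrite [recip G * c]mulrC dvdp_mul2r // recip_eq0.
Qed.

Lemma rbar_cong (v : {poly F}) : (size v <= m)%N -> n %| xinv m v - rbar m v.
Proof.
move=> sv; rewrite (xinvE m sv) /rbar.
apply: (@sum_Xn_cong _ m m (fun i => v`_i) (fun i => m.-1 * i)%N (fun i => (m - i) %% m)%N).
move=> i im; rewrite modn_mod; apply/eqP; rewrite -(eqn_modDr i) subnK 1?ltnW //.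
by rewrite (_ : m.-1 * i + i = i * m)%N ?modnMl ?modnn //; nia.
Qed.

End CyclicPerp.

(* The proof argument lets [x |-> x ^+ q] carry ring morphism instances, so
   that [frobq q] is [map_poly] of a ring morphism. *)
Definition pow_frob (F : fieldType) (q : nat) of [pchar F].-nat q : F -> F :=
  fun x => x ^+ q.

Section PowFrobenius.
Variables (F : fieldType) (q : nat) (Hq : [pchar F].-nat q).

Fact pow_frob_is_nmod_morphism : nmod_morphism (pow_frob Hq).
Proof. by split=> [|x y]; rewrite /pow_frob ?expr0n ?exprDn_pchar //; case: q Hq. Qed.

Fact pow_frob_is_monoid_morphism : monoid_morphism (pow_frob Hq).
Proof. by split=> [|x y]; rewrite /pow_frob ?expr1n ?exprMn. Qed.

HB.instance Definition _ :=
  GRing.isNmodMorphism.Build F F (pow_frob Hq) pow_frob_is_nmod_morphism.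
HB.instance Definition _ :=
  GRing.isMonoidMorphism.Build F F (pow_frob Hq) pow_frob_is_monoid_morphism.

End PowFrobenius.

Lemma pcharnat_of_card_sqr (F : finFieldType) q :
  #|F| = (q ^ 2)%N -> [pchar F].-nat q.
Proof.
move=> cardF; have [p p_pr pcharFp] := finPcharP F.
rewrite (eq_pnat _ (pcharf_eq pcharFp)); apply: (@pnat_dvd _ #|F|).
  by rewrite cardF dvdn_mulr.
by have := abelem_pgroup (fin_ring_pchar_abelem pcharFp); rewrite /pgroup cardsT.
Qed.

Lemma frobqE (F : finFieldType) q (Hq : [pchar F].-nat q) k :
  frobq q k = map_poly (pow_frob Hq) k.
Proof. by []. Qed.

Lemma frobqK (F : finFieldType) q :
  #|F| = (q ^ 2)%N -> involutive (frobq q : {poly F} -> {poly F}).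
Proof.
move=> cardF p; rewrite !(frobqE (pcharnat_of_card_sqr cardF)); apply/polyP=> i.
rewrite !coef_map /= /pow_frob -exprM mulnn -cardF.
exact: expf_card.
Qed.

Section Reduction.
Variables (F : finFieldType) (m : nat).
Hypothesis m_gt0 : (0 < m)%N.
Local Notation n := (xm1 F m).
Implicit Types a b g v w x y z : {poly F}.

Lemma size_red x : (size (red m x) <= m)%N.
Proof. by rewrite -ltnS -(size_xm1 F m_gt0) ltn_modp xm1_neq0. Qed.

Lemma red_small x : (size x <= m)%N -> red m x = x.
Proof. by move=> sx; rewrite /red modp_small // size_xm1. Qed.

Lemma red_cong x : n %| red m x - x.
Proof. by rewrite /red {2}(divp_eq x n) opprD addrCA subrr addr0 dvdpNr dvdp_mull. Qed.

Lemma dvdp_red g x : g %| n -> (g %| red m x) = (g %| x).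
Proof. by move=> gn; rewrite /red -(dvdp_mod _ gn). Qed.

Lemma dvdp_mul_red g x y : g %| n -> (g %| x * red m y) = (g %| x * y).
Proof.
move=> gn; apply: dvdp_sub_eq.
by rewrite -mulrBr dvdp_mull // (dvdp_trans gn (red_cong y)).
Qed.

Lemma coef_red_pred w : (size w <= m + m.-1)%N -> (red m w)`_m.-1 = w`_m.-1.
Proof.
move=> sw; rewrite {2}(divp_eq w n) coefD /xm1 mulrBr mulr1 coefB coefMXn ltn_predL m_gt0.
rewrite [(w %/ _)`__]nth_default ?subr0 ?add0r //.
by rewrite size_divp ?xm1_neq0 // size_xm1 //= leq_subLR.
Qed.

Lemma xm1_dvd_of_coef_red z :
  (forall k, (k < m)%N -> (red m ('X^k * z))`_m.-1 = 0) -> n %| z.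
Proof.
move=> z0; apply/modp_eq0P/polyP=> j; rewrite coef0 -/(red m z).
have [jm|jm] := ltnP j m; last exact: nth_default (leq_trans (size_red z) jm).
have := z0 (m.-1 - j)%N; rewrite /red -modp_mul -/(red m z) coef_red_pred; last first.
  rewrite (leq_trans (size_polyMleq _ _)) // size_polyXn.
  by move: (size_red z); lia.
by rewrite coefXnM (leq_gtF (leq_subr _ _)) subKn; [apply; lia | lia].
Qed.

Lemma QCcode_triangularE g1 g2 v a b :
  g1 %| n -> g2 %| n -> (size a <= m)%N -> (size b <= m)%N ->
  QCcode m g1 (v * g1) 0 g2 (poly_rV a, poly_rV b) <-> g1 %| a /\ g2 %| b - v * a.
Proof.
move=> g1n g2n sa sb; split=> [[r1 [r2 [ea eb]]] | [/dvdpP[s aE] /dvdpP[t bE]]].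
  have {}ea : a = red m (r1 * g1).
    by rewrite -(poly_rV_K sa) ea mulr0 addr0 poly_rV_K ?size_red.
  have {}eb : b = red m (r1 * (v * g1) + r2 * g2).
    by rewrite -(poly_rV_K sb) eb poly_rV_K ?size_red.
  split; first by rewrite ea dvdp_red ?dvdp_mull.
  have ca : n %| a - r1 * g1 by rewrite ea red_cong.
  have cb : n %| b - (r1 * (v * g1) + r2 * g2) by rewrite eb red_cong.
  have -> : b - v * a = r2 * g2 - v * (a - r1 * g1) + (b - (r1 * (v * g1) + r2 * g2)).
    by ring.
  rewrite dvdp_add ?(dvdp_trans g2n cb) //.
  by rewrite dvdp_sub ?dvdp_mull ?dvdpp ?(dvdp_trans g2n ca).
exists s, t; rewrite /vecR mulr0 addr0 -aE red_small //.
have -> : s * (v * g1) + t * g2 = b by rewrite -bE aE; ring.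
by rewrite red_small.
Qed.

End Reduction.

Section HermitianDual.
Variables (F : finFieldType) (q m : nat).
Hypotheses (Hq : [pchar F].-nat q) (m_gt0 : (0 < m)%N).
Local Notation n := (xm1 F m).
Local Notation fr := (map_poly (pow_frob Hq)).
Implicit Types a b u x : {poly F}.

Lemma fr_xm1 : fr n = n.
Proof. by rewrite rmorphB /= map_polyXn rmorph1. Qed.

Lemma fr_red x : fr (red m x) = red m (fr x).
Proof. by rewrite /red map_modp fr_xm1. Qed.

Lemma sum_qpow_coef_red u b : (size b <= m)%N ->
  \sum_(i < m) (red m u)`_i ^+ q * b`_i = (red m (fr u * revp m b))`_m.-1.
Proof.
move=> sb; have -> : red m (fr u * revp m b) = red m (fr (red m u) * revp m b).
  by rewrite fr_red /red mulrC -modp_mul mulrC.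
rewrite (coef_red_pred m_gt0); last first.
  rewrite (leq_trans (size_polyMleq _ _)) // size_map_poly.
  have sr : (size (revp m b) <= m)%N by exact: size_poly.
  by move: (size_red m_gt0 u) sr; move: (size _) (size _) => x y; lia.
rewrite coefM prednK //; apply: eq_bigr => j _.
have jm := ltn_ord j.
by rewrite coef_map /= /pow_frob coef_poly ifT ?subKn //; lia.
Qed.

Lemma hermIP_vecR u1 u2 a b : (size a <= m)%N -> (size b <= m)%N ->
  hermIP m q (vecR m u1, vecR m u2) (poly_rV a, poly_rV b) =
  (red m (fr u1 * revp m a + fr u2 * revp m b))`_m.-1.
Proof.
move=> sa sb; rewrite /red modpD coefD -!/(red m _) -!sum_qpow_coef_red //.
by congr (_ + _); apply: eq_bigr => i _; rewrite !mxE.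
Qed.

(* The pairing with [([a], [b])] is a coefficient of a residue, and the
   coefficients of [x^(m-1)] in the residues of the [x^k * z], [k < m],
   determine [z] modulo [x^m - 1]. *)
Lemma hermDual_QCcodeE u11 u12 u21 u22 a b :
  (size a <= m)%N -> (size b <= m)%N ->
  hermDual m q (QCcode m u11 u12 u21 u22) (poly_rV a, poly_rV b) <->
  n %| xinv m (fr u11) * a + xinv m (fr u12) * b /\
  n %| xinv m (fr u21) * a + xinv m (fr u22) * b.
Proof.
move=> sa sb; rewrite -!dvdp_xm1_revp //.
set z1 := _ + _ * revp m b; set z2 := _ + _ * revp m b.
have pairing r1 r2 : hermIP m q
    (vecR m (r1 * u11 + r2 * u21), vecR m (r1 * u12 + r2 * u22)) (poly_rV a, poly_rV b)
    = (red m (fr r1 * z1 + fr r2 * z2))`_m.-1.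
  by rewrite hermIP_vecR // /z1 /z2 !rmorphD !rmorphM /=; congr (red m _)`__; ring.
split=> [dual | [nz1 nz2] _ [r1 [r2 ->]]].
  split; apply: (xm1_dvd_of_coef_red m_gt0) => k _.
  - have := dual _ (ex_intro _ ('X^k) (ex_intro _ 0 erefl)).
    by rewrite pairing map_polyXn rmorph0 mul0r addr0.
  - have := dual _ (ex_intro _ 0 (ex_intro _ ('X^k) erefl)).
    by rewrite pairing map_polyXn rmorph0 mul0r add0r.
rewrite pairing (_ : red m _ = 0) ?coef0 //; apply/modp_eq0P.
by rewrite dvdp_add ?dvdp_mull.
Qed.

End HermitianDual.

Section DualContaining.
Variables (F : finFieldType) (q m : nat).
Hypotheses (cardF : #|F| = (q ^ 2)%N) (m_gt0 : (0 < m)%N).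
Let Hq := pcharnat_of_card_sqr cardF.
Local Notation n := (xm1 F m).
Local Notation fr := (map_poly (pow_frob Hq)).
Local Notation hconj p := (xinv m (fr p)).
Implicit Types a b c g h v x y : {poly F}.

Lemma hconjK_cong x : n %| hconj (hconj x) - x.
Proof.
by rewrite map_comp_poly map_polyXn -!(frobqE Hq) frobqK // xinvK_cong.
Qed.

Lemma dvdp_hconj y : (n %| hconj y) = (n %| y).
Proof. by rewrite dvdp_xinv // -[in RHS](dvdp_map (pow_frob Hq)) fr_xm1. Qed.

Lemma dvdp_xm1_hconj_mul g c : g \is monic -> g %| n ->
  (n %| hconj g * c) = (perpH m q g %| c).
Proof.
move=> g_monic gn; rewrite dvdp_xm1_xinv_mul ?monic_neq0 ?map_monic //.
by rewrite -(fr_xm1 m Hq) dvdp_map.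
Qed.

Lemma perpH_dvdp_xm1 g : g \is monic -> g %| n -> perpH m q g %| n.
Proof. by move=> g_monic gn; rewrite -dvdp_xm1_hconj_mul ?dvdp_mull. Qed.

(* Multiply by [n %/ h] and conjugate: [hconj (n %/ h)] is a multiple of
   [perpH m q h], and [n %| g * hconj (perpH m q g)]. *)
Lemma perpH_dvdp_swap g h v : g \is monic -> g %| n -> h \is monic -> h %| n ->
  g %| perpH m q h * hconj v -> h %| v * perpH m q g.
Proof.
move=> g_monic gn h_monic hn /dvdpP[k hvE].
have k0 : n %/ h != 0 := dvdpN0 (divp_dvd hn) (xm1_neq0 F m_gt0).
rewrite -(dvdp_mul2l _ _ k0) divpK // -dvdp_hconj !rmorphM /=.
have /dvdpP[j ->] : perpH m q h %| hconj (n %/ h).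
  by rewrite -dvdp_xm1_hconj_mul // -!rmorphM [h * _]mulrC divpK // dvdp_hconj.
have ng : n %| g * hconj (perpH m q g).
  have := dvdp_mulr (hconj (perpH m q g)) (hconjK_cong g).
  rewrite mulrBl => /dvdp_sub_eq <-.
  by rewrite -!rmorphM dvdp_hconj dvdp_xm1_hconj_mul.
by rewrite mulrA -(mulrA j) hvE mulrA -(mulrA _ g) dvdp_mull.
Qed.

Variables g1 g2 v1 : {poly F}.
Hypotheses (g1_monic : g1 \is monic) (g1n : g1 %| n).
Hypotheses (g2_monic : g2 \is monic) (g2n : g2 %| n).
Hypothesis sv1 : (size v1 <= m)%N.
Local Notation D := (QCcode m g1 (v1 * g1) 0 g2).
Local Notation W := (frobq q (rbar m v1)).
Local Notation g1' := (perpH m q g1).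
Local Notation g2' := (perpH m q g2).

Lemma hconj_rbar_cong : n %| hconj v1 - W.
Proof.
have -> : hconj v1 = fr (xinv m v1) by rewrite map_comp_poly map_polyXn.
by rewrite (frobqE Hq) -rmorphB -(fr_xm1 m Hq) dvdp_map rbar_cong.
Qed.

Lemma hermDual_triangularE a b : (size a <= m)%N -> (size b <= m)%N ->
  hermDual m q D (poly_rV a, poly_rV b) <-> g1' %| a + W * b /\ g2' %| b.
Proof.
move=> sa sb; rewrite (hermDual_QCcodeE Hq m_gt0 _ _ _ _ sa sb) !rmorph0 mul0r add0r.
rewrite -!dvdp_xm1_hconj_mul //; set hg1 := hconj g1.
suff -> : (n %| hg1 * a + hconj (v1 * g1) * b) = (n %| hg1 * (a + W * b)) by [].
apply: dvdp_sub_eq; rewrite !rmorphM /= -/hg1.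
have -> : hg1 * a + hconj v1 * hg1 * b - hg1 * (a + W * b) = hg1 * b * (hconj v1 - W) by ring.
by rewrite dvdp_mull // hconj_rbar_cong.
Qed.

Lemma dual_containing_dvdp : herm_dual_containing m q D ->
  [/\ g1 %| g1', g1 %| g2' * W & g2 %| g2' * (1 + v1 * W)].
Proof.
move=> DC.
have dual_in_D a b : (size a <= m)%N -> (size b <= m)%N ->
    g1' %| a + W * b -> g2' %| b -> g1 %| a /\ g2 %| b - v1 * a.
  move=> sa sb d1 d2; apply/(QCcode_triangularE m_gt0 v1 g1n g2n sa sb)/DC.
  exact/(hermDual_triangularE sa sb).
have g1'n := perpH_dvdp_xm1 g1_monic g1n.
have g2'n := perpH_dvdp_xm1 g2_monic g2n.
(* Test on the dual words [(g1', 0)] and [(- W * g2', g2')], reduced. *)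
have [c1 _] : g1 %| red m g1' /\ g2 %| 0 - v1 * red m g1'.
  apply: dual_in_D; rewrite ?size_red ?size_poly0 ?dvdp0 //.
  by rewrite mulr0 addr0 dvdp_red.
set a := red m (- (W * g2')); set b := red m g2'.
have [c2 c3] : g1 %| a /\ g2 %| b - v1 * a.
  apply: dual_in_D; rewrite ?size_red ?dvdp_red //.
  apply: (dvdp_trans g1'n).
  have -> : a + W * b = (a - - (W * g2')) + W * (b - g2') by ring.
  by rewrite dvdp_add ?dvdp_mull ?red_cong.
split.
- by rewrite -(dvdp_red _ g1n).
- by move: c2; rewrite dvdp_red // dvdpNr mulrC.
- have e : g2 %| (b - v1 * a) - g2' * (1 + v1 * W).
    apply: (dvdp_trans g2n).
    have -> : b - v1 * a - g2' * (1 + v1 * W) = (b - g2') - v1 * (a - - (W * g2')) by ring.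
    by rewrite dvdp_sub ?dvdp_mull ?red_cong.
  by rewrite -(dvdp_sub_eq e).
Qed.

Lemma dvdp_dual_containing :
    g1 %| g1' -> g1 %| g2' * W -> g2 %| g2' * (1 + v1 * W) ->
  herm_dual_containing m q D.
Proof.
move=> c1 c2 c3 [x y] dual.
rewrite -[x]rVpolyK -[y]rVpolyK in dual *.
set a := rVpoly x in dual *; set b := rVpoly y in dual *.
have sa : (size a <= m)%N by apply: size_poly.
have sb : (size b <= m)%N by apply: size_poly.
apply/(QCcode_triangularE m_gt0 v1 g1n g2n sa sb).
have [/dvdpP[s es] /dvdpP[t et]] := (hermDual_triangularE sa sb).1 dual.
have c4 : g2 %| v1 * g1'.
  apply: (perpH_dvdp_swap g1_monic g1n g2_monic g2n).
  have e : g1 %| g2' * hconj v1 - g2' * W.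
    by apply: (dvdp_trans g1n); rewrite -mulrBr dvdp_mull // hconj_rbar_cong.
  by rewrite (dvdp_sub_eq e).
have aE : a = s * g1' - W * (t * g2') by rewrite -et -es; ring.
split.
- rewrite aE (_ : W * _ = t * (g2' * W)); last by ring.
  by rewrite dvdp_sub ?(dvdp_mull _ c1) ?(dvdp_mull _ c2).
- have -> : b - v1 * a = t * (g2' * (1 + v1 * W)) - s * (v1 * g1').
    by rewrite aE et; ring.
  by rewrite dvdp_sub ?(dvdp_mull _ c3) ?(dvdp_mull _ c4).
Qed.

Lemma dual_containing_triangularE : herm_dual_containing m q D <->
  [/\ g1 %| g1', g1 %| g2' * W & g2 %| g2' * (1 + v1 * W)].
Proof.
split=> [|[]]; [exact: dual_containing_dvdp | exact: dvdp_dual_containing].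
Qed.

End DualContaining.

Theorem mainTheorem8 (F : finFieldType) (q m : nat) (g1 g2 v1 : {poly F}) :
  #|F| = (q ^ 2)%N -> (0 < m)%N ->
  g1 \is monic -> g1 %| xm1 F m ->
  g2 \is monic -> g2 %| xm1 F m ->
  (size v1 <= m)%N ->
  herm_dual_containing m q (QCcode m g1 (v1 * g1) 0 g2) <->
  [/\ g1 %| red m (perpH m q g1),
      g1 %| red m (perpH m q g2 * frobq q (rbar m v1)) &
      g2 %| red m (perpH m q g2 * red m (1 + v1 * frobq q (rbar m v1)))].
Proof.
move=> cardF m_gt0 g1_monic g1n g2_monic g2n sv1.
rewrite (dual_containing_triangularE cardF m_gt0 g1_monic g1n g2_monic g2n sv1).
by rewrite !(dvdp_red _ g1n) !(dvdp_red _ g2n) dvdp_mul_red.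
Qed.
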